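(* Let $(L,\wedge,\vee,0,1)$ be a bounded lattice. Then its multiplicative Nakano mosaic $(L,\boxdot,1)$, where $x\boxdot y:=\{z\in L\mid x\wedge y=x\wedge z=z\wedge y\}$, is an L-mosaic (with neutral element $1$ playing the role of $0$ in the definition).
   Context: For a multioperation $\boxdot:A\times A\to\wp(A)$ and subsets $X,Y$, $X\boxdot Y:=\bigcup_{x\in X,y\in Y}x\boxdot y$. A commutative mosaic $(A,\boxdot,e)$: $x\boxdot y=y\boxdot x$, $e\boxdot x=\{x\}$ for all $x$, and for some endofunction $\rho$, $z\in x\boxdot y$ implies $x\in z\boxdot\rho(y)$ and $y\in\rho(x)\boxdot z$. An L-mosaic is a commutative mosaic $(A,\boxdot,e)$ such that: (Lms1) $e,x\in x\boxdot x$ for all $x$; (Lms2) $(x\boxdot x)\boxdot(x\boxdot x)=x\boxdot x$; (Lms3) $(x\boxdot(x\boxdot y))\cap((x\boxdot y)\boxdot y)\subseteq x\boxdot y$; (Lms4) for all $x,y$ there is a unique $z\in x\boxdot y$ with $x,y\in z\boxdot z$. *)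

From HB Require Import structures.
From mathcomp Require Import all_boot all_order.
Set Implicit Arguments. Unset Strict Implicit. Unset Printing Implicit Defensive.
Import Order.TTheory.
Local Open Scope order_scope.

Definition mset (A : Type) := A -> Prop.

(* A multioperation A x A -> P(A): (m x y z) means z \in x [.] y. *)
Definition multiop (A : Type) := A -> A -> mset A.

Definition mseteq (A : Type) (X Y : mset A) : Prop := forall z, X z <-> Y z.

Definition mlift (A : Type) (m : multiop A) (X Y : mset A) : mset A :=
  fun z => exists x y, X x /\ Y y /\ m x y z.

Definition msing (A : Type) (a : A) : mset A := fun z => z = a.

Definition msubset (A : Type) (X Y : mset A) : Prop := forall z, X z -> Y z.

Definition mcap (A : Type) (X Y : mset A) : mset A := fun z => X z /\ Y z.

Definition commutative_mosaic (A : Type) (m : multiop A) (e : A) : Prop :=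
  (forall x y, mseteq (m x y) (m y x)) /\
  (forall x, mseteq (m e x) (msing x)) /\
  (exists rho : A -> A, forall x y z,
      m x y z -> m z (rho y) x /\ m (rho x) z y).

Definition L_mosaic (A : Type) (m : multiop A) (e : A) : Prop :=
  commutative_mosaic m e /\
  (forall x, m x x e /\ m x x x) /\
  (forall x, mseteq (mlift m (m x x) (m x x)) (m x x)) /\
  (forall x y, msubset (mcap (mlift m (msing x) (m x y))
                             (mlift m (m x y) (msing y)))
                       (m x y)) /\
  (forall x y, exists! z, m x y z /\ m z z x /\ m z z y).

Definition nakano_mul (d : Order.disp_t) (L : latticeType d) : multiop L :=
  fun x y z => x `&` y = x `&` z /\ x `&` z = z `&` y.

From HB Require Import structures.
From mathcomp Require Import all_boot all_order.
Local Open Scope order_scope.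
Import Order.TTheory.

(* Every axiom reduces to the observation that [z \in x [.] y] says exactly
   that the three pairwise meets of [x], [y], [z] coincide.  In particular
   [x [.] x] is the principal filter of [x], and [x `&` y] is the least element
   of [x [.] y], which is also the unique one lying below both [x] and [y]. *)

Section NakanoLattice.
Context {d : Order.disp_t} {L : latticeType d}.
Implicit Types x y z : L.

Lemma nakano_mulC x y : mseteq (nakano_mul x y) (nakano_mul y x).
Proof.
move=> z; rewrite /nakano_mul [y `&` x]meetC [z `&` x]meetC [y `&` z]meetC.
by split=> -[E1 E2]; split; congruence.
Qed.

Lemma nakano_mul_rotate x y z :
  nakano_mul x y z -> nakano_mul z y x /\ nakano_mul x z y.
Proof.
move=> [E1 E2]; have Czx := meetC z x; have Cyz := meetC y z.
by split; split; congruence.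
Qed.

Lemma nakano_mulxx x z : nakano_mul x x z <-> x <= z.
Proof.
rewrite /nakano_mul meetxx; split=> [[E _]|/meet_idPl E].
  by apply/meet_idPl; rewrite -E.
by rewrite E meetC E.
Qed.

Lemma nakano_mul_ge {x y z} : nakano_mul x y z -> x `&` y <= z.
Proof. by move=> [-> _]; exact: leIr. Qed.

Lemma nakano_mul_meet x y : nakano_mul x y (x `&` y).
Proof. by rewrite /nakano_mul meetKI meetIK. Qed.

Lemma nakano_mulxx_idem x :
  mseteq (mlift (@nakano_mul d L) (nakano_mul x x) (nakano_mul x x)) (nakano_mul x x).
Proof.
move=> z; split.
  move=> [a [b [/nakano_mulxx xa [/nakano_mulxx xb abz]]]]; apply/nakano_mulxx.
  have xab : x <= a `&` b by rewrite lexI xa xb.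
  exact: le_trans xab (nakano_mul_ge abz).
move=> xz; exists z, z.
by split; [|split] => //; apply/nakano_mulxx.
Qed.

Lemma nakano_mul_cap_sub x y :
  msubset (mcap (mlift (@nakano_mul d L) (msing x) (nakano_mul x y))
                (mlift (@nakano_mul d L) (nakano_mul x y) (msing y)))
          (nakano_mul x y).
Proof.
move=> z [[_ [w [-> [[E1 E2] [E3 E4]]]]] [w' [_ [[E5 E6] [-> [E7 E8]]]]]].
by split; congruence.
Qed.

Lemma nakano_mul_below_unique x y :
  exists! z, nakano_mul x y z /\ nakano_mul z z x /\ nakano_mul z z y.
Proof.
exists (x `&` y); split.
  by split; [exact: nakano_mul_meet | split; apply/nakano_mulxx; rewrite ?leIl ?leIr].
move=> z [xyz [/nakano_mulxx zx /nakano_mulxx zy]].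
by apply/le_anti; rewrite lexI zx zy (nakano_mul_ge xyz).
Qed.

End NakanoLattice.

Lemma nakano_mul1x {d : Order.disp_t} {L : tLatticeType d} (x : L) :
  mseteq (nakano_mul \top x) (msing x).
Proof.
move=> z; rewrite /nakano_mul /msing !meet1x.
by split=> [[-> _] | ->]; last rewrite meetxx.
Qed.

Lemma nakano_commutative_mosaic {d : Order.disp_t} {L : tLatticeType d} :
  commutative_mosaic (@nakano_mul d L) \top.
Proof.
split; [exact: nakano_mulC | split; [exact: nakano_mul1x |]].
by exists id; exact: nakano_mul_rotate.
Qed.

Theorem mainTheorem9 (d : Order.disp_t) (L : tbLatticeType d) :
  L_mosaic (@nakano_mul d L) \top.
Proof.
split; first exact: nakano_commutative_mosaic.
split; first by move=> x; split; apply/nakano_mulxx; rewrite ?lex1.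
split; first exact: nakano_mulxx_idem.
split; first exact: nakano_mul_cap_sub.
exact: nakano_mul_below_unique.
Qed.
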